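(* Let $L$ be a localization functor on the category of abelian groups, let $D$ be an abelian group and let $\lambda$ be an infinite cardinal. If $D^\kappa_{<\lambda}$ is $L$-local for some cardinal $\kappa\geq\lambda$, then $D^\alpha_{<\lambda}$ is $L$-local for every cardinal $\alpha\geq\lambda$.
   Context: All groups are abelian. A localization is a functor $L:\mathcal{Ab}\to\mathcal{Ab}$ with a natural transformation $a:\mathrm{Id}\to L$ such that for every group $X$ we have $a_{LX}=La_X$ and $a_{LX}:LX\to LLX$ is an isomorphism. A group $X$ is $L$-local if $a_X$ is an isomorphism; a homomorphism $f$ is an $L$-equivalence if $Lf$ is an isomorphism. For cardinals $\kappa\geq\lambda$ with $\lambda$ infinite, $D^\kappa_{<\lambda}$ denotes the subgroup of $\prod_\kappa D$ consisting of those elements whose support has cardinality less than $\lambda$. *)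

From Stdlib Require Import Classical FunctionalExtensionality ProofIrrelevance.

Set Implicit Arguments.

Record AbGroup := mkAb {
  carrier :> Type;
  zero : carrier;
  add : carrier -> carrier -> carrier;
  opp : carrier -> carrier;
  addA : forall x y z, add x (add y z) = add (add x y) z;
  addC : forall x y, add x y = add y x;
  add0 : forall x, add zero x = x;
  addN : forall x, add (opp x) x = zero }.
Arguments zero {_}.
Arguments add {_} _ _.
Arguments opp {_} _.
Arguments addA {_} _ _ _.
Arguments addC {_} _ _.
Arguments add0 {_} _.
Arguments addN {_} _.

Record hom (A B : AbGroup) := mkHom {
  hfun :> A -> B;
  hom_add : forall x y, hfun (add x y) = add (hfun x) (hfun y) }.

Definition id_hom (A : AbGroup) : hom A A := @mkHom A A (fun x => x) (fun x y => eq_refl).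

Definition comp_hom (A B C : AbGroup) (g : hom B C) (f : hom A B) : hom A C.
Proof.
  refine (@mkHom A C (fun x => g (f x)) _).
  intros x y; rewrite (hom_add f), (hom_add g); reflexivity.
Defined.

Definition hom_eq (A B : AbGroup) (f g : hom A B) : Prop := forall x, f x = g x.

Definition is_iso (A B : AbGroup) (f : hom A B) : Prop :=
  exists g : hom B A, hom_eq (comp_hom g f) (id_hom A) /\ hom_eq (comp_hom f g) (id_hom B).

Record Localization := {
  Lobj : AbGroup -> AbGroup;
  Lmap : forall A B : AbGroup, hom A B -> hom (Lobj A) (Lobj B);
  Lmap_ext : forall A B (f g : hom A B), hom_eq f g -> hom_eq (Lmap f) (Lmap g);
  Lmap_id : forall A, hom_eq (Lmap (id_hom A)) (id_hom (Lobj A));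
  Lmap_comp : forall A B C (f : hom A B) (g : hom B C),
      hom_eq (Lmap (comp_hom g f)) (comp_hom (Lmap g) (Lmap f));
  unit : forall A : AbGroup, hom A (Lobj A);
  unit_nat : forall A B (f : hom A B),
      hom_eq (comp_hom (Lmap f) (unit A)) (comp_hom (unit B) f);
  unit_L : forall A, hom_eq (unit (Lobj A)) (Lmap (unit A));
  unit_L_iso : forall A, is_iso (unit (Lobj A)) }.

Definition is_local (L : Localization) (X : AbGroup) : Prop := is_iso (unit L X).

(** * Cardinals (represented by types) *)
Definition card_le (A B : Type) : Prop := exists f : A -> B, forall x y, f x = f y -> x = y.
Definition card_lt (A B : Type) : Prop := card_le A B /\ ~ card_le B A.
Definition infinite (A : Type) : Prop := ~ exists n : nat, card_le A {i : nat | i < n}.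

Definition support (D : AbGroup) (K : Type) (f : K -> carrier D) : Type := {i : K | f i <> zero}.
Definition small_supp (D : AbGroup) (K lam : Type) (f : K -> D) : Prop :=
  card_lt (@support D K f) lam.
Arguments support {D K} f.
Arguments small_supp {D K} lam f.

(** The set of elements of support < lambda is closed under addition
   (true for infinite lambda under ZFC; taken as a hypothesis). *)
Definition supp_add_closed (D : AbGroup) (K lam : Type) : Prop :=
  forall f g : K -> D, small_supp lam f -> small_supp lam g ->
    small_supp lam (fun i => add (f i) (g i)).

Lemma opp_eq0 (D : AbGroup) (x : D) : opp x = zero -> x = zero.
Proof.
  intro H. transitivity (add (opp x) x).
  - rewrite H. symmetry. apply add0.
  - apply addN.
Qed.

Lemma small_zero (D : AbGroup) (K lam : Type) :
  infinite lam -> small_supp lam (fun _ : K => (zero : D)).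
Proof.
  intro Hinf. split.
  - exists (fun s : support (fun _ : K => (zero : D)) =>
              match proj2_sig s eq_refl return lam with end).
    intros [x Hx]; destruct (Hx eq_refl).
  - intros [g _]. apply Hinf. exists 0.
    exists (fun l => match proj2_sig (g l) eq_refl with end).
    intros x; destruct (proj2_sig (g x) eq_refl).
Qed.

Lemma opp0 (D : AbGroup) : opp (zero : D) = zero.
Proof. rewrite <- (add0 (opp (zero : D))), addC. apply addN. Qed.

Lemma small_opp (D : AbGroup) (K lam : Type) (f : K -> D) :
  small_supp lam f -> small_supp lam (fun i => opp (f i)).
Proof.
  intros [[h hi] hn].
  assert (F1 : forall i, opp (f i) <> zero -> f i <> zero).
  { intros i Hi E; apply Hi; rewrite E; apply opp0. }
  assert (F2 : forall i, f i <> zero -> opp (f i) <> zero).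
  { intros i Hi E; apply Hi; apply opp_eq0; exact E. }
  split.
  - exists (fun s : support (fun i => opp (f i)) =>
       h (exist _ (proj1_sig s) (F1 _ (proj2_sig s)))).
    intros [x Hx] [y Hy] E. apply hi in E. injection E as E'. subst y.
    f_equal; apply proof_irrelevance.
  - intros [g gi]. apply hn.
    exists (fun l => let s := g l in
              exist (fun i => f i <> zero) (proj1_sig s) (F1 _ (proj2_sig s))).
    intros x y E. apply gi. injection E as E'.
    destruct (g x) as [a Ha], (g y) as [b Hb]; simpl in *; subst b.
    f_equal; apply proof_irrelevance.
Qed.

Section Dsmall.
Variables (D : AbGroup) (K lam : Type) (Hinf : infinite lam)
          (Hcl : supp_add_closed D K lam).

Definition Dcar : Type := {f : K -> D | small_supp lam f}.
Definition Dzero : Dcar := exist _ (fun _ => zero) (@small_zero D K lam Hinf).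
Definition Dadd (f g : Dcar) : Dcar :=
  exist _ (fun i => add (proj1_sig f i) (proj1_sig g i))
        (Hcl (proj2_sig f) (proj2_sig g)).
Definition Dopp (f : Dcar) : Dcar :=
  exist _ (fun i => opp (proj1_sig f i)) (small_opp (proj2_sig f)).

Lemma Dcar_ext (f g : Dcar) : (forall i, proj1_sig f i = proj1_sig g i) -> f = g.
Proof.
  destruct f as [f Hf], g as [g Hg]; simpl; intro E.
  apply functional_extensionality in E; subst g.
  f_equal; apply proof_irrelevance.
Qed.

Definition Dsmall : AbGroup.
Proof.
  refine (@mkAb Dcar Dzero Dadd Dopp _ _ _ _);
    intros; apply Dcar_ext; intro i; simpl.
  - apply addA.
  - apply addC.
  - apply add0.
  - apply addN.
Defined.
End Dsmall.
Arguments Dsmall : clear implicits.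

From Stdlib Require Import Classical ClassicalEpsilon FunctionalExtensionality PropExtensionality ProofIrrelevance.
From mathcomp Require boolp classical_sets.

(* Since D^lambda_{<lambda} is a retract of D^kappa_{<lambda}, it is local. Hence every
   xi in L(D^alpha_{<lambda}) has, for each embedding e of lambda into alpha, coordinates
   in D^lambda_{<lambda}: the preimage under the unit of L(restriction along e)(xi). The
   coordinate at i depends only on the point e(i) of alpha, which defines a function
   rho(xi) : alpha -> D. Its support is smaller than lambda, since an embedding of lambda
   into the support would give coordinates of full support. Thus rho is a homomorphism
   retracting the unit of D^alpha_{<lambda}, which is therefore local. *)

Set Implicit Arguments.

(* [classical_sets.Zorn] is stated for boolean relations. *)
Lemma Zorn_Prop (T : Type) (le : T -> T -> Prop) :
  (forall x, le x x) -> (forall x y z, le x y -> le y z -> le x z) ->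
  (forall x y, le x y -> le y x -> x = y) ->
  (forall C : T -> Prop, (forall x y, C x -> C y -> le x y \/ le y x) ->
     exists u, forall x, C x -> le x u) ->
  exists m, forall x, le m x -> x = m.
Proof.
  intros Hrefl Htrans Hanti Hchain.
  destruct (@classical_sets.Zorn T (fun x y => boolp.asbool (le x y))) as [m Hm].
  - intro x; apply boolp.asboolT, Hrefl.
  - intros x y z Hxy Hyz; apply boolp.asboolT.
    exact (Htrans _ _ _ (boolp.asboolW Hxy) (boolp.asboolW Hyz)).
  - intros x y Hxy Hyx; exact (Hanti _ _ (boolp.asboolW Hxy) (boolp.asboolW Hyx)).
  - intros C HC. destruct (Hchain C) as [u Hu].
    + intros x y Cx Cy.
      destruct (HC x y Cx Cy) as [H|H]; [left|right]; exact (boolp.asboolW H).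
    + exists u; intros x Cx; apply boolp.asboolT, Hu, Cx.
  - exists m; intros x Hx; apply Hm, boolp.asboolT, Hx.
Qed.

Lemma card_le_of_rel (A B : Type) (P : A -> B -> Prop) :
  (forall a, exists b, P a b) -> (forall a a' b, P a b -> P a' b -> a = a') ->
  card_le A B.
Proof.
  intros Htot Hinj.
  exists (fun a => proj1_sig (constructive_indefinite_description _ (Htot a))).
  intros a a' E. apply (Hinj a a' (proj1_sig (constructive_indefinite_description _ (Htot a)))).
  - apply proj2_sig.
  - rewrite E; apply proj2_sig.
Qed.

Section PartialInjections.
Variables A B : Type.

Record pinj := {
  prel :> A -> B -> Prop;
  prel_fun : forall a b b', prel a b -> prel a b' -> b = b';
  prel_inj : forall a a' b, prel a b -> prel a' b -> a = a' }.

Definition pinj_le (R S : pinj) := forall a b, R a b -> S a b.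

Lemma pinj_le_antisym (R S : pinj) : pinj_le R S -> pinj_le S R -> R = S.
Proof.
  destruct R as [r fr ir], S as [s fs is]; unfold pinj_le; simpl; intros Hrs Hsr.
  assert (r = s) as ->.
  { extensionality a; extensionality b; apply propositional_extensionality; split; auto. }
  f_equal; apply proof_irrelevance.
Qed.

Lemma pinj_chain_ub (C : pinj -> Prop) :
  (forall R S, C R -> C S -> pinj_le R S \/ pinj_le S R) ->
  exists U, forall R, C R -> pinj_le R U.
Proof.
  intro HC.
  assert (Hfun : forall a b b', (exists R, C R /\ R a b) -> (exists R, C R /\ R a b') -> b = b').
  { intros a b b' [R [CR H]] [S [CS H']].
    destruct (HC R S CR CS) as [h|h]; [apply (prel_fun S a)|apply (prel_fun R a)]; auto. }
  assert (Hinj : forall a a' b, (exists R, C R /\ R a b) -> (exists R, C R /\ R a' b) -> a = a').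
  { intros a a' b [R [CR H]] [S [CS H']].
    destruct (HC R S CR CS) as [h|h]; [apply (prel_inj S _ _ b)|apply (prel_inj R _ _ b)]; auto. }
  exists (@Build_pinj _ Hfun Hinj). intros R CR a b H. exists R; auto.
Qed.

Lemma pinj_extend (R : pinj) a0 b0 :
  (forall b, ~ R a0 b) -> (forall a, ~ R a b0) -> exists S, pinj_le R S /\ S a0 b0.
Proof.
  intros Ha0 Hb0.
  assert (Hfun : forall a b b', R a b \/ (a = a0 /\ b = b0) -> R a b' \/ (a = a0 /\ b' = b0) -> b = b').
  { intros a b b' [H|[Ea Eb]] [H'|[Ea' Eb']]; subst.
    - apply (prel_fun R a); auto.
    - destruct (Ha0 _ H).
    - destruct (Ha0 _ H').
    - reflexivity. }
  assert (Hinj : forall a a' b, R a b \/ (a = a0 /\ b = b0) -> R a' b \/ (a' = a0 /\ b = b0) -> a = a').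
  { intros a a' b [H|[Ea Eb]] [H'|[Ea' Eb']]; subst.
    - apply (prel_inj R _ _ b); auto.
    - destruct (Hb0 _ H).
    - destruct (Hb0 _ H').
    - reflexivity. }
  exists (@Build_pinj _ Hfun Hinj). split; [intros a b H; left; exact H | right; auto].
Qed.

Lemma card_le_total : card_le A B \/ card_le B A.
Proof.
  destruct (@Zorn_Prop pinj pinj_le (fun R a b H => H)
              (fun R S T HRS HST a b H => HST a b (HRS a b H)) pinj_le_antisym pinj_chain_ub)
    as [M HM].
  destruct (classic (forall a, exists b, M a b)) as [Htot|Htot].
  { left. exact (card_le_of_rel _ Htot (prel_inj M)). }
  destruct (classic (forall b, exists a, M a b)) as [Hsurj|Hsurj].
  { right. apply (card_le_of_rel (fun b a => M a b) Hsurj).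
    intros b b' a H H'; exact (prel_fun M a b b' H H'). }
  exfalso.
  destruct (not_all_ex_not _ _ Htot) as [a0 Ha0].
  destruct (not_all_ex_not _ _ Hsurj) as [b0 Hb0].
  destruct (@pinj_extend M a0 b0) as [S [HMS HS]]; [intros b H; eauto | intros a H; eauto |].
  rewrite (HM S HMS) in HS. eauto.
Qed.
End PartialInjections.

Section LocalObjects.
Variable L : Localization.

Lemma iso_inj (A B : AbGroup) (f : hom A B) : is_iso f -> forall x y, f x = f y -> x = y.
Proof.
  intros [g [Hgf _]] x y E. transitivity (g (f x)).
  - symmetry; exact (Hgf x).
  - rewrite E; exact (Hgf y).
Qed.

Definition iso_inv (A B : AbGroup) (f : hom A B) (H : is_iso f) : hom B A :=
  proj1_sig (constructive_indefinite_description _ H).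

Lemma iso_invK (A B : AbGroup) (f : hom A B) (H : is_iso f) x : iso_inv H (f x) = x.
Proof.
  unfold iso_inv. destruct constructive_indefinite_description as [g [Hgf Hfg]]. exact (Hgf x).
Qed.

Lemma iso_invKV (A B : AbGroup) (f : hom A B) (H : is_iso f) y : f (iso_inv H y) = y.
Proof.
  unfold iso_inv. destruct constructive_indefinite_description as [g [Hgf Hfg]]. exact (Hfg y).
Qed.

Lemma Lmap_unit (X Y : AbGroup) (f : hom X Y) x : Lmap L f (unit L X x) = unit L Y (f x).
Proof. exact (unit_nat L f x). Qed.

Lemma Lmap_compE (X Y Z : AbGroup) (f : hom X Y) (g : hom Y Z) z :
  Lmap L (comp_hom g f) z = Lmap L g (Lmap L f z).
Proof. exact (Lmap_comp L f g z). Qed.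

Lemma hom_from_L_ext (X Y : AbGroup) (HY : is_local L Y) (h h' : hom (Lobj L X) Y) :
  (forall x, h (unit L X x) = h' (unit L X x)) -> forall z, h z = h' z.
Proof.
  intros E z. apply (iso_inj HY).
  rewrite <- !Lmap_unit, (unit_L L X z), <- !Lmap_compE.
  apply (Lmap_ext L). exact E.
Qed.

Lemma local_of_unit_retraction (X : AbGroup) (r : hom (Lobj L X) X) :
  (forall x, r (unit L X x) = x) -> is_local L X.
Proof.
  intro Hr. exists r. split.
  - exact Hr.
  - intro z. apply (@hom_from_L_ext X _ (unit_L_iso L X) (comp_hom (unit L X) r) (id_hom _)).
    intro x. simpl. rewrite Hr. reflexivity.
Qed.

Lemma local_of_retract (X Y : AbGroup) (HY : is_local L Y) (i : hom X Y) (r : hom Y X) :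
  (forall x, r (i x) = x) -> is_local L X.
Proof.
  intro Hri. apply (local_of_unit_retraction (comp_hom r (comp_hom (iso_inv HY) (Lmap L i)))).
  intro x. simpl. rewrite Lmap_unit, iso_invK. apply Hri.
Qed.

Lemma unit_inv_nat (X Y : AbGroup) (HX : is_local L X) (HY : is_local L Y) (m : hom X Y) xi :
  m (iso_inv HX xi) = iso_inv HY (Lmap L m xi).
Proof.
  apply (iso_inj HY). rewrite iso_invKV, <- Lmap_unit, iso_invKV. reflexivity.
Qed.
End LocalObjects.

Lemma proj1_sig_inj (T : Type) (P : T -> Prop) (s s' : sig P) :
  proj1_sig s = proj1_sig s' -> s = s'.
Proof. apply eq_sig_hprop. intros; apply proof_irrelevance. Qed.

Lemma card_le_trans (A B C : Type) : card_le A B -> card_le B C -> card_le A C.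
Proof. intros [f Hf] [g Hg]. exists (fun a => g (f a)). auto. Qed.

Lemma infinite_inhabited (A : Type) : infinite A -> inhabited A.
Proof.
  intro Hinf. apply NNPP. intro N. apply Hinf. exists 0.
  exists (fun a => False_rect _ (N (inhabits a))). intro a. destruct (N (inhabits a)).
Qed.

Definition swap (T : Type) (a b x : T) : T :=
  if excluded_middle_informative (x = a) then b
  else if excluded_middle_informative (x = b) then a else x.

Lemma swap_inj (T : Type) (a b x y : T) : swap a b x = swap a b y -> x = y.
Proof.
  unfold swap.
  destruct (excluded_middle_informative (x = a)), (excluded_middle_informative (x = b)),
    (excluded_middle_informative (y = a)), (excluded_middle_informative (y = b));
    congruence.
Qed.

Lemma swap_r (T : Type) (a b : T) : swap a b b = a.
Proof.
  unfold swap.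
  destruct (excluded_middle_informative (b = a)); [congruence|].
  destruct (excluded_middle_informative (b = b)); congruence.
Qed.

Section SmallSupport.
Variables (D : AbGroup) (lam : Type) (Hinf : infinite lam)
  (Hcl : forall K : Type, supp_add_closed D K lam).
Notation small K := (Dsmall D K lam Hinf (@Hcl K)).

Lemma small_supp_le (K1 K2 : Type) (f : K1 -> D) (g : K2 -> D) :
  card_le (support g) (support f) -> small_supp lam f -> small_supp lam g.
Proof.
  intros Hgf [Hf Hnf]. split.
  - exact (card_le_trans Hgf Hf).
  - intro H. exact (Hnf (card_le_trans H Hgf)).
Qed.

Lemma small_supp_subsingleton (K : Type) (f : K -> D) :
  (forall s s' : support f, s = s') -> small_supp lam f.
Proof.
  intro Hs. destruct (infinite_inhabited Hinf) as [l0]. split.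
  - exists (fun _ => l0). intros; apply Hs.
  - intros [u Hu]. apply Hinf. exists 1.
    exists (fun _ => exist _ 0 (le_n 1)). intros x y _. apply Hu, Hs.
Qed.

Section AlongInjection.
Variables (K1 K2 : Type) (e : K1 -> K2) (e_inj : forall x y, e x = e y -> x = y).

Definition restrict_fun (f : small K2) : small K1.
Proof.
  refine (exist _ (fun i => proj1_sig f (e i)) _).
  apply (small_supp_le (f := proj1_sig f)); [|exact (proj2_sig f)].
  exists (fun s : support (fun i => proj1_sig f (e i)) =>
            exist (fun k => proj1_sig f k <> zero) (e (proj1_sig s)) (proj2_sig s)).
  intros s s' E. apply proj1_sig_inj, e_inj. exact (f_equal (@proj1_sig _ _) E).
Defined.

Definition restrict : hom (small K2) (small K1).
Proof.
  refine (@mkHom (small K2) (small K1) restrict_fun _).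
  intros f g. apply Dcar_ext. reflexivity.
Defined.

Definition preimage (k : K2) : option K1 :=
  match excluded_middle_informative (exists i, e i = k) with
  | left H => Some (proj1_sig (constructive_indefinite_description _ H))
  | right _ => None
  end.

Lemma preimage_e i : preimage (e i) = Some i.
Proof.
  unfold preimage. destruct excluded_middle_informative as [H|H].
  - f_equal. apply e_inj. apply (proj2_sig (constructive_indefinite_description _ H)).
  - exfalso. eauto.
Qed.

Lemma preimage_Some k i : preimage k = Some i -> e i = k.
Proof.
  unfold preimage. destruct excluded_middle_informative as [H|H]; intro E; inversion E.
  apply (proj2_sig (constructive_indefinite_description _ H)).
Qed.

Definition extend_fun (g : small K1) : small K2.
Proof.
  refine (exist _ (fun k => match preimage k with
                            | Some i => proj1_sig g i
                            | None => zero
                            end) _).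
  apply (small_supp_le (f := proj1_sig g)); [|exact (proj2_sig g)].
  apply (card_le_of_rel (fun s t => e (proj1_sig t) = proj1_sig s)).
  - intros [k Hk]. simpl in *. destruct (preimage k) as [i|] eqn:Ek; [|contradiction].
    exists (exist _ i Hk). apply preimage_Some, Ek.
  - intros s s' t E E'. apply proj1_sig_inj. congruence.
Defined.

Definition extend : hom (small K1) (small K2).
Proof.
  refine (@mkHom (small K1) (small K2) extend_fun _).
  intros f g. apply Dcar_ext. intro k. simpl.
  destruct (preimage k); [reflexivity|symmetry; apply add0].
Defined.

Lemma restrict_extend g : restrict (extend g) = g.
Proof. apply Dcar_ext. intro i. simpl. rewrite preimage_e. reflexivity. Qed.
End AlongInjection.

Definition move_entry_fun (K : Type) (i j : K) (g : small K) : small K.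
Proof.
  refine (exist _ (fun k => if excluded_middle_informative (k = j) then proj1_sig g i
                            else zero) _).
  apply small_supp_subsingleton. intros [s Hs] [s' Hs']. apply proj1_sig_inj. simpl in *.
  destruct (excluded_middle_informative (s = j)); [|contradiction].
  destruct (excluded_middle_informative (s' = j)); [|contradiction]. congruence.
Defined.

Definition move_entry (K : Type) (i j : K) : hom (small K) (small K).
Proof.
  refine (@mkHom (small K) (small K) (move_entry_fun i j) _).
  intros f g. apply Dcar_ext. intro k. simpl.
  destruct excluded_middle_informative; [reflexivity|symmetry; apply add0].
Defined.

Lemma move_entry_at (K : Type) (i j : K) g : proj1_sig (move_entry i j g) j = proj1_sig g i.
Proof. simpl. destruct excluded_middle_informative; congruence. Qed.
End SmallSupport.

Section UnitRetraction.
Variables (L : Localization) (D : AbGroup) (lam : Type) (Hinf : infinite lam)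
  (Hcl : forall K : Type, supp_add_closed D K lam).
Notation small K := (Dsmall D K lam Hinf (@Hcl K)).
Variables (alpha : Type) (e0 : lam -> alpha) (e0_inj : forall x y, e0 x = e0 y -> x = y)
  (l0 : lam) (Hlam : is_local L (small lam)).

Definition injection := {e : lam -> alpha | forall x y, e x = e y -> x = y}.

Definition Lrestrict (e : injection) (xi : Lobj L (small alpha)) : small lam :=
  iso_inv Hlam (Lmap L (restrict Hinf Hcl (proj1_sig e) (proj2_sig e)) xi).

(* [move_entry] identifies both sides with one entry of [xi]; naturality of the inverse
   unit transports the identity [move_entry i i' o restrict e = move_entry i' i' o restrict e']. *)
Lemma Lrestrict_agree (e e' : injection) i i' xi :
  proj1_sig e i = proj1_sig e' i' ->
  proj1_sig (Lrestrict e xi) i = proj1_sig (Lrestrict e' xi) i'.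
Proof.
  intro E.
  rewrite <- (move_entry_at Hcl i i' (Lrestrict e xi)),
          <- (move_entry_at Hcl i' i' (Lrestrict e' xi)).
  unfold Lrestrict. rewrite !(unit_inv_nat Hlam Hlam), <- !Lmap_compE.
  do 2 f_equal. apply (Lmap_ext L). intro f. apply Dcar_ext. intro k. simpl.
  destruct excluded_middle_informative; [rewrite E|]; reflexivity.
Qed.

Definition injection_through (j : alpha) : injection :=
  exist (fun e : lam -> alpha => forall x y, e x = e y -> x = y) (fun i => swap j (e0 l0) (e0 i))
    (fun x y E => e0_inj (swap_inj j (e0 l0) (e0 x) (e0 y) E)).

Definition rho_fun (xi : Lobj L (small alpha)) (j : alpha) : D :=
  proj1_sig (Lrestrict (injection_through j) xi) l0.

Lemma rho_funE (e : injection) i xi :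
  rho_fun xi (proj1_sig e i) = proj1_sig (Lrestrict e xi) i.
Proof. apply Lrestrict_agree. apply swap_r. Qed.

Lemma rho_fun_supp_not_large xi : ~ card_le lam (support (rho_fun xi)).
Proof.
  intros [h h_inj].
  pose (e := exist (fun e : lam -> alpha => forall x y, e x = e y -> x = y)
               (fun l => proj1_sig (h l))
               (fun x y E => h_inj x y (proj1_sig_inj (h x) (h y) E))).
  apply (proj2 (proj2_sig (Lrestrict e xi))).
  assert (Hfull : forall l, proj1_sig (Lrestrict e xi) l <> zero).
  { intro l. rewrite <- rho_funE. exact (proj2_sig (h l)). }
  exists (fun l => exist _ l (Hfull l)). intros x y E. exact (f_equal (@proj1_sig _ _) E).
Qed.

Lemma rho_fun_small xi : small_supp lam (rho_fun xi).
Proof.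
  split; [|apply rho_fun_supp_not_large].
  destruct (card_le_total (support (rho_fun xi)) lam) as [H|H]; [exact H|].
  destruct (rho_fun_supp_not_large H).
Qed.

Definition rho : hom (Lobj L (small alpha)) (small alpha).
Proof.
  refine (@mkHom (Lobj L (small alpha)) (small alpha)
            (fun xi => exist _ (rho_fun xi) (rho_fun_small xi)) _).
  intros xi xi'. apply Dcar_ext. intro j. simpl. unfold rho_fun, Lrestrict.
  rewrite (hom_add (Lmap L _)), (hom_add (iso_inv Hlam)). reflexivity.
Defined.

Lemma rho_unit x : rho (unit L _ x) = x.
Proof.
  apply Dcar_ext. intro j. simpl. unfold rho_fun, Lrestrict.
  rewrite Lmap_unit, iso_invK. simpl. rewrite swap_r. reflexivity.
Qed.

Lemma local_small_of_local_small_lam : is_local L (small alpha).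
Proof. exact (local_of_unit_retraction L rho rho_unit). Qed.
End UnitRetraction.

Theorem lemma1 (L : Localization) (D : AbGroup) (lambda : Type)
  (Hinf : infinite lambda)
  (Hcl : forall alpha : Type, supp_add_closed D alpha lambda)
  (kappa : Type) (Hkl : card_le lambda kappa)
  (Hloc : is_local L (Dsmall D kappa lambda Hinf (Hcl kappa))) :
  forall alpha : Type, card_le lambda alpha ->
    is_local L (Dsmall D alpha lambda Hinf (Hcl alpha)).
Proof.
  intros alpha [e0 e0_inj].
  destruct Hkl as [e1 e1_inj].
  destruct (infinite_inhabited Hinf) as [l0].
  apply (local_small_of_local_small_lam Hcl e0 e0_inj l0).
  apply (local_of_retract Hloc (extend Hinf Hcl e1) (restrict Hinf Hcl e1 e1_inj)).
  apply restrict_extend.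
Qed.
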